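(* Suppose $N>n$ and let $(F,G)\in\mathcal R^{(1)}$. Then $r^{(2)}_{F,G}=\frac nN+\sqrt{\frac{n(N-n)}{N^2(N-1)}}$ if and only if $(F,G)$ is $2$-uniform.
   Context: $\mathcal H$ is a complex Hilbert space of finite dimension $n$, inner product linear in the first argument. A finite sequence $F=\{f_i\}_{i=1}^N$ is a frame if there are $0<A\le B$ with $A\|f\|^2\le\sum_i|\langle f,f_i\rangle|^2\le B\|f\|^2$ for all $f$. $G=\{g_i\}_{i=1}^N$ is a dual of $F$ if $f=\sum_i\langle f,g_i\rangle f_i$ for all $f$; $(F,G)$ is then an $(N,n)$ dual pair. A dual pair is $1$-uniform if $\langle f_i,g_i\rangle$ is independent of $i$, and $2$-uniform if it is $1$-uniform and $\langle f_i,g_j\rangle\langle f_j,g_i\rangle$ is the same constant for all $i\ne j$. $\mathcal A_m$ is the set of $m$-element subsets of $\{1,\dots,N\}$; $E_{\Lambda,F,G}f=\sum_{i\in\Lambda}\langle f,f_i\rangle g_i$; $\rho$ is spectral radius; $r^{(m)}_{F,G}=\max_{\Lambda\in\mathcal A_m}\rho(E_{\Lambda,F,G})$; $r^{(1)}=\inf\{r^{(1)}_{F,G}:(F,G)\text{ an }(N,n)\text{ dual pair}\}$; $\mathcal R^{(1)}=\{(F,G):r^{(1)}_{F,G}=r^{(1)}\}$. *)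

From HB Require Import structures.
From mathcomp Require Import all_boot all_order all_algebra.
From mathcomp Require Import complex.
From mathcomp Require Import all_classical all_reals.
Set Implicit Arguments. Unset Strict Implicit. Unset Printing Implicit Defensive.
Import Order.TTheory GRing.Theory Num.Theory.
Local Open Scope ring_scope.

Definition cmod (R : realType) (z : R[i]) : R := ComplexField.Normc.normc z.

(* standard inner product, linear in the first argument *)
Definition ip (R : realType) (n : nat) (x y : 'cV[R[i]]_n) : R[i] :=
  \sum_(k < n) x k 0 * conjc (y k 0).

Definition norm2 (R : realType) (n : nat) (x : 'cV[R[i]]_n) : R :=
  \sum_(k < n) cmod (x k 0) ^+ 2.

Definition is_frame (R : realType) (n N : nat) (F : 'I_N -> 'cV[R[i]]_n) : Prop :=
  exists A B : R, 0 < A /\ A <= B /\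
    forall f : 'cV[R[i]]_n,
      A * norm2 f <= \sum_(i < N) cmod (ip f (F i)) ^+ 2 /\
      \sum_(i < N) cmod (ip f (F i)) ^+ 2 <= B * norm2 f.

Definition is_dual (R : realType) (n N : nat) (F G : 'I_N -> 'cV[R[i]]_n) : Prop :=
  forall f : 'cV[R[i]]_n, f = \sum_(i < N) ip f (G i) *: F i.

Definition dual_pair (R : realType) (n N : nat) (F G : 'I_N -> 'cV[R[i]]_n) : Prop :=
  is_frame F /\ is_dual F G.

Definition Eop (R : realType) (n N : nat) (F G : 'I_N -> 'cV[R[i]]_n)
  (L : {set 'I_N}) (f : 'cV[R[i]]_n) : 'cV[R[i]]_n :=
  \sum_(i in L) ip f (F i) *: G i.

Definition is_eigenvalue (R : realType) (n : nat)
  (T : 'cV[R[i]]_n -> 'cV[R[i]]_n) (l : R[i]) : Prop :=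
  exists f : 'cV[R[i]]_n, f != 0 /\ T f = l *: f.

Definition spec_rad (R : realType) (n : nat) (T : 'cV[R[i]]_n -> 'cV[R[i]]_n) : R :=
  sup [set r : R | exists l, is_eigenvalue T l /\ r = cmod l].

Definition r_m (R : realType) (n N : nat) (m : nat) (F G : 'I_N -> 'cV[R[i]]_n) : R :=
  \big[Num.max/0]_(L : {set 'I_N} | #|L| == m) spec_rad (Eop F G L).

Definition r1_inf (R : realType) (n N : nat) : R :=
  inf [set r : R | exists F G : 'I_N -> 'cV[R[i]]_n, dual_pair F G /\ r = r_m 1 F G].

Definition in_R1 (R : realType) (n N : nat) (F G : 'I_N -> 'cV[R[i]]_n) : Prop :=
  dual_pair F G /\ r_m 1 F G = r1_inf R n N.

Definition uniform1 (R : realType) (n N : nat) (F G : 'I_N -> 'cV[R[i]]_n) : Prop :=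
  exists c : R[i], forall i : 'I_N, ip (F i) (G i) = c.

Definition uniform2 (R : realType) (n N : nat) (F G : 'I_N -> 'cV[R[i]]_n) : Prop :=
  uniform1 F G /\
  exists d : R[i], forall i j : 'I_N, i != j -> ip (F i) (G j) * ip (F j) (G i) = d.

(* Since G is dual to F, the cross-Gram matrix M = (<f_j, g_i>)_(i,j) satisfies
   tr M = tr M^2 = n.  The harmonic frame shows r^(1) <= n/N, and then
   |<f_i, g_i>| <= n/N together with sum_i <f_i, g_i> = n forces
   <f_i, g_i> = a := n/N for a pair in R^(1).  On span {g_i, g_j} the operator
   E_{i,j} has matrix [[a, b], [c, a]] where b c is the conjugate of
   p_ij = <f_i, g_j> <f_j, g_i>, so its nonzero eigenvalues are a +- sqrt (b c),
   while tr M^2 = n gives sum_(i <> j) p_ij = n - n^2/N = N (N - 1) t with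
   t = n (N - n) / (N^2 (N - 1)).  If r^(2) <= a + sqrt t, every Re p_ij is at
   most t, so the sum forces p_ij = t for all i <> j; conversely, if all p_ij
   equal some d, the sum forces d = t and all spectral radii are a + sqrt t. *)

From HB Require Import structures.
From mathcomp Require Import all_boot all_order all_algebra.
From mathcomp Require Import complex.
From mathcomp Require Import all_classical all_reals trigo.
From mathcomp Require Import ring lra.
Set Implicit Arguments. Unset Strict Implicit. Unset Printing Implicit Defensive.
Import Order.TTheory GRing.Theory Num.Theory.
Local Open Scope ring_scope.
Local Open Scope complex_scope.

(* Plain [Re] would denote the real part of a [numClosedFieldType]. *)
Notation cRe := complex.Re.
Notation cIm := complex.Im.

Section ComplexModulus.
Variable R : realType.
Implicit Types (z w : R[i]) (a : R).

Lemma cmod_sqr z : cmod z ^+ 2 = cRe z ^+ 2 + cIm z ^+ 2.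
Proof. by case: z => x y; rewrite /cmod sqr_sqrtr // addr_ge0 ?sqr_ge0. Qed.

Lemma cmod_ge0 z : 0 <= cmod z.
Proof. by case: z => x y; rewrite /cmod sqrtr_ge0. Qed.

Lemma cmod0 : cmod (0 : R[i]) = 0.
Proof. exact: ComplexField.Normc.normc0. Qed.

Lemma cmodM z w : cmod (z * w) = cmod z * cmod w.
Proof. exact: ComplexField.Normc.normcM. Qed.

Lemma cmodD z w : cmod (z + w) <= cmod z + cmod w.
Proof. exact: le_normcD. Qed.

Lemma cmod_conj z : cmod (conjc z) = cmod z.
Proof. by case: z => x y; rewrite /cmod /= sqrrN. Qed.

Lemma cmod_real a : 0 <= a -> cmod a%:C = a.
Proof. by move=> a0; rewrite /cmod /= expr0n addr0 sqrtr_sqr ger0_norm. Qed.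

Lemma Re_le_cmod z : cRe z <= cmod z.
Proof.
case: z => x y; rewrite /cmod /=.
have [x0|x0] := lerP x 0; first by rewrite (le_trans x0) ?sqrtr_ge0.
rewrite -[x in x <= _](ger0_norm (ltW x0)) -sqrtr_sqr.
by apply: ler_wsqrtr; rewrite lerDl sqr_ge0.
Qed.

Lemma mulcJ z : z * conjc z = (cmod z ^+ 2)%:C.
Proof.
rewrite cmod_sqr; case: z => x y; apply/eqP.
by rewrite eq_complex /= -!expr2; apply/andP; split; apply/eqP; ring.
Qed.

Lemma Re_sum (I : finType) (P : pred I) (z : I -> R[i]) :
  cRe (\sum_(i | P i) z i) = \sum_(i | P i) cRe (z i).
Proof. exact: raddf_sum. Qed.

Lemma Re_sqr_le z t : 0 <= t -> 0 <= cRe z -> cRe z <= Num.sqrt t ->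
  cRe (z ^+ 2) <= t /\ (cRe (z ^+ 2) = t -> z ^+ 2 = t%:C).
Proof.
move=> t0; case: z => x y /= x0 xt.
have r0 := sqrtr_ge0 t; have rt := sqr_sqrtr t0.
set r := Num.sqrt t in xt r0 rt.
have hx : x ^+ 2 <= t by rewrite -rt; nra.
split; first by nra.
move=> e; have y0 : y = 0 by apply/eqP; rewrite -sqrf_eq0 eq_le sqr_ge0 andbT; nra.
by apply/eqP; rewrite eq_complex /= -e y0 !mulr0 !mul0r subr0 addr0 !eqxx.
Qed.

End ComplexModulus.

Section RealSums.
Variable R : realType.

Lemma eq_bound_of_sum N (x : 'I_N -> R) c :
  (forall i, x i <= c) -> \sum_(i < N) x i = c *+ N -> forall i, x i = c.
Proof.
move=> xc sx i; apply/eqP; rewrite eq_sym -subr_eq0; apply/eqP.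
apply: (psumr_eq0P (P := predT) (F := fun i => c - x i)) => // [j _|].
  by rewrite subr_ge0.
by rewrite sumrB sumr_const card_ord sx subrr.
Qed.

Lemma sum_offdiag_const (V : zmodType) N (x : V) :
  \sum_(i < N) \sum_(j < N | j != i) x = x *+ (N * N.-1).
Proof.
have h i : \sum_(j < N | j != i) x = x *+ N.-1.
  by rewrite sumr_const -[N in N.-1]card_ord -(cardC1 i); congr (_ *+ #|_|).
by rewrite (eq_bigr _ (fun i _ => h i)) sumr_const card_ord -mulrnA mulnC.
Qed.

Lemma eq_bound_of_sum_offdiag N (x : 'I_N -> 'I_N -> R) c :
  (forall i j, i != j -> x i j <= c) ->
  \sum_(i < N) \sum_(j < N | j != i) x i j = c *+ (N * N.-1) ->
  forall i j, i != j -> x i j = c.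
Proof.
move=> xc sx i j ij.
have dx k l : l != k -> 0 <= c - x k l by move=> lk; rewrite subr_ge0 xc // eq_sym.
have s0 : \sum_(k < N) \sum_(l < N | l != k) (c - x k l) = 0.
  by under eq_bigr do rewrite sumrB; rewrite sumrB sum_offdiag_const sx subrr.
have si : \sum_(l < N | l != i) (c - x i l) = 0.
  by apply: (psumr_eq0P _ s0) => // k _; apply: sumr_ge0 => l; apply: dx.
apply/eqP; rewrite eq_sym -subr_eq0; apply/eqP.
by apply: (psumr_eq0P _ si) => [l|]; [apply: dx | rewrite eq_sym].
Qed.

End RealSums.

Lemma eq_cmod_le_of_sum (R : realType) N (z : 'I_N -> R[i]) c :
  (forall i, cmod (z i) <= c) -> \sum_(i < N) cRe (z i) = c *+ N -> forall i, z i = c%:C.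
Proof.
move=> zc sz; have Re_z : forall i, cRe (z i) = c.
  by apply: eq_bound_of_sum => // i; apply: le_trans (Re_le_cmod _) (zc i).
move=> i; have := zc i; have := cmod_ge0 (z i); have := cmod_sqr (z i).
case: (z i) (Re_z i) => x y /= -> e c0 zc'.
have y0 : y = 0 by apply/eqP; rewrite -sqrf_eq0 eq_le sqr_ge0 andbT; nra.
by rewrite y0.
Qed.

Section InnerProduct.
Variables (R : realType) (n : nat).
Implicit Types (x y z : 'cV[R[i]]_n) (a : R[i]).

Lemma ipDl x y z : ip (x + y) z = ip x z + ip y z.
Proof. by rewrite /ip -big_split; apply: eq_bigr => k _; rewrite mxE mulrDl. Qed.

Lemma ipZl a x z : ip (a *: x) z = a * ip x z.
Proof. by rewrite /ip mulr_sumr; apply: eq_bigr => k _; rewrite mxE mulrA. Qed.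

Lemma ip0l z : ip 0 z = 0.
Proof. by rewrite -(scale0r 0) ipZl mul0r. Qed.

Lemma ip_conj x y : ip y x = conjc (ip x y).
Proof. by rewrite /ip rmorph_sum; apply: eq_bigr => k _; rewrite rmorphM /= conjcK mulrC. Qed.

Lemma ipZr a x z : ip z (a *: x) = conjc a * ip z x.
Proof. by rewrite /ip mulr_sumr; apply: eq_bigr => k _; rewrite mxE rmorphM /= mulrCA. Qed.

Lemma ip_sumr m (v : 'I_m -> 'cV[R[i]]_n) z :
  ip z (\sum_(i < m) v i) = \sum_(i < m) ip z (v i).
Proof.
by rewrite /ip exchange_big; apply: eq_bigr => k _; rewrite summxE rmorph_sum big_distrr.
Qed.

Lemma ip_self x : ip x x = (norm2 x)%:C.
Proof. by rewrite /ip /norm2 rmorph_sum; apply: eq_bigr => k _; apply: mulcJ. Qed.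

Lemma ip_delta_mx k z : ip (delta_mx k 0) z = conjc (z k 0).
Proof.
rewrite /ip (bigD1 k) //= big1 => [|l lk]; last by rewrite mxE (negPf lk) mul0r.
by rewrite mxE !eqxx mul1r addr0.
Qed.

End InnerProduct.

Section DualTrace.
Variables (R : realType) (n N : nat) (F G : 'I_N -> 'cV[R[i]]_n).
Hypothesis FG : is_dual F G.

(* [A *m B] is the frame operator [f |-> sum_i <f, g_i> f_i] and [B *m A]
   the cross-Gram matrix [(<f_j, g_i>)_(i,j)]. *)
Let A : 'M[R[i]]_(n, N) := \matrix_(k, i) F i k 0.
Let B : 'M[R[i]]_(N, n) := \matrix_(i, k) conjc (G i k 0).

Let mulAB : A *m B = 1%:M.
Proof.
apply/matrixP => l k; rewrite !mxE.
have := congr1 (fun v : 'cV_n => v l 0) (FG (delta_mx k 0)).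
rewrite summxE !mxE eqxx andbT => ->.
by apply: eq_bigr => i _; rewrite !mxE ip_delta_mx mulrC.
Qed.

Let mulBA i j : (B *m A) i j = ip (F j) (G i).
Proof. by rewrite !mxE; apply: eq_bigr => k _; rewrite !mxE mulrC. Qed.

Lemma dual_trace : \sum_(i < N) ip (F i) (G i) = n%:R.
Proof.
rewrite -mxtrace1 -mulAB mxtrace_mulC.
by apply: eq_bigr => i _; rewrite mulBA.
Qed.

Lemma dual_trace_sqr :
  \sum_(i < N) \sum_(j < N) ip (F i) (G j) * ip (F j) (G i) = n%:R.
Proof.
have -> : n%:R = \tr ((B *m A) *m (B *m A)).
  by rewrite mulmxA mxtrace_mulC !mulmxA mulAB mul1mx mulAB mxtrace1.
apply: eq_bigr => i _; rewrite mxE; apply: eq_bigr => j _.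
by rewrite !mulBA mulrC.
Qed.

End DualTrace.

Section SpectralRadius.
Local Open Scope classical_set_scope.
Variables (R : realType) (n : nat) (T : 'cV[R[i]]_n -> 'cV[R[i]]_n).

Lemma spec_rad_ge0 : 0 <= spec_rad T.
Proof.
rewrite /spec_rad; set S := (X in sup X).
have [supS|] := pselect (has_sup S); last by move/sup_out ->.
have [r Sr] := supS.1; apply: le_trans (sup_upper_bound supS Sr).
by case: Sr => l [_ ->]; apply: cmod_ge0.
Qed.

Lemma spec_rad_le M :
  0 <= M -> (forall l, is_eigenvalue T l -> cmod l <= M) -> spec_rad T <= M.
Proof.
move=> M0 TM; rewrite /spec_rad; set S := (X in sup X).
have [S0|S0] := pselect (S !=set0); last by rewrite sup_out // => -[].
by apply: ge_sup => // r [l [Tl ->]]; apply: TM.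
Qed.

(* The bound [M] only makes the set of moduli bounded, so that [sup] is not junk. *)
Lemma cmod_eigenvalue_le M l :
  (forall l, is_eigenvalue T l -> cmod l <= M) ->
  is_eigenvalue T l -> cmod l <= spec_rad T.
Proof.
move=> TM Tl; apply: ub_le_sup; last by exists l.
by exists M => r [l' [Tl' ->]]; apply: TM.
Qed.

End SpectralRadius.

Section MaxSpectralRadius.
Variables (R : realType) (n N m : nat) (F G : 'I_N -> 'cV[R[i]]_n).

Lemma r_m_ge0 : 0 <= r_m m F G.
Proof.
rewrite /r_m; elim/big_ind: _ => // [x y x0 y0|L _]; last exact: spec_rad_ge0.
by rewrite le_max x0.
Qed.

Lemma r_m_le M : 0 <= M ->
  (forall L : {set 'I_N}, #|L| = m -> spec_rad (Eop F G L) <= M) -> r_m m F G <= M.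
Proof. by move=> M0 FGM; apply: bigmax_le => // L /eqP; apply: FGM. Qed.

Lemma spec_rad_le_r_m (L : {set 'I_N}) : #|L| = m -> spec_rad (Eop F G L) <= r_m m F G.
Proof.
move=> Lm; apply: (le_bigmax_cond _ (P := fun L : {set 'I_N} => #|L| == m)).
by rewrite Lm.
Qed.

End MaxSpectralRadius.

Section SmallSubsets.
Variables (R : realType) (n N : nat) (F G : 'I_N -> 'cV[R[i]]_n).

Lemma Eop_set1 i f : Eop F G [set i] f = ip f (F i) *: G i.
Proof. by rewrite /Eop big_set1. Qed.

Lemma Eop_set2 i j f : i != j ->
  Eop F G [set i; j] f = ip f (F i) *: G i + ip f (F j) *: G j.
Proof. by move=> ij; rewrite /Eop big_setU1 ?big_set1 // inE. Qed.

Lemma eigenvalue_Eop_set1 i l :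
  is_eigenvalue (Eop F G [set i]) l -> l = 0 \/ l = ip (G i) (F i).
Proof.
case=> f [f0]; rewrite Eop_set1 => Ef.
have := congr1 (fun v => ip v (F i)) Ef; rewrite /= !ipZl.
have [x0|x0] := eqVneq (ip f (F i)) 0.
  move: Ef; rewrite x0 scale0r => /esym/eqP; rewrite scaler_eq0 (negPf f0) orbF.
  by move/eqP; left.
by move=> e; right; apply: (mulIf x0); rewrite -e mulrC.
Qed.

Lemma is_eigenvalue_Eop_set1 i :
  ip (G i) (F i) != 0 -> is_eigenvalue (Eop F G [set i]) (ip (G i) (F i)).
Proof.
move=> nz; exists (G i); split; last by rewrite Eop_set1.
by apply: contra nz => /eqP ->; rewrite ip0l.
Qed.

Lemma cmod_eigenvalue_Eop_set1_le i l :
  is_eigenvalue (Eop F G [set i]) l -> cmod l <= cmod (ip (G i) (F i)).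
Proof. by case/eigenvalue_Eop_set1 => ->; rewrite ?cmod0 ?cmod_ge0. Qed.

Section Pair.
Variables (i j : 'I_N) (a : R[i]).
Hypotheses (ij : i != j) (Fi : ip (G i) (F i) = a) (Fj : ip (G j) (F j) = a).

(* In the basis [g_i, g_j], [E_{i,j}] restricted to its range has matrix
   [[a, b], [c, a]]; its nonzero eigenvalues are the roots of
   [(l - a)^2 = b c]. *)
Let b := ip (G j) (F i).
Let c := ip (G i) (F j).

Lemma eigenvalue_Eop_set2 l :
  is_eigenvalue (Eop F G [set i; j]) l -> l = 0 \/ (l - a) ^+ 2 = b * c.
Proof.
case=> f [f0]; rewrite Eop_set2 // => Ef.
set x := ip f (F i) in Ef; set y := ip f (F j) in Ef.
have ex : x * a + y * b = l * x.
  by have := congr1 (fun v => ip v (F i)) Ef; rewrite /= ipDl !ipZl Fi.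
have ey : x * c + y * a = l * y.
  by have := congr1 (fun v => ip v (F j)) Ef; rewrite /= ipDl !ipZl Fj.
have ex0 : ((l - a) ^+ 2 - b * c) * x = 0.
  rewrite (_ : _ * x = (l - a) * (l * x - (x * a + y * b))
                       + b * (l * y - (x * c + y * a))); last by ring.
  by rewrite ex ey !subrr !mulr0 addr0.
have ey0 : ((l - a) ^+ 2 - b * c) * y = 0.
  rewrite (_ : _ * y = (l - a) * (l * y - (x * c + y * a))
                       + c * (l * x - (x * a + y * b))); last by ring.
  by rewrite ex ey !subrr !mulr0 addr0.
have [->|l0] := eqVneq l 0; [by left | right].
apply/eqP; rewrite -subr_eq0; apply/eqP.
have [x0|x0] := eqVneq x 0; last by move/eqP: ex0; rewrite mulf_eq0 (negPf x0) orbF => /eqP.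
have [y0|y0] := eqVneq y 0; last by move/eqP: ey0; rewrite mulf_eq0 (negPf y0) orbF => /eqP.
move: Ef; rewrite x0 y0 !scale0r addr0 => /esym/eqP.
by rewrite scaler_eq0 (negPf f0) (negPf l0).
Qed.

Lemma is_eigenvalue_Eop_set2 (l : R[i]) : l != 0 -> (l - a) ^+ 2 = b * c ->
  is_eigenvalue (Eop F G [set i; j]) l.
Proof.
move=> l0 e.
suff [al [be [nz eal ebe]]] : exists al be : R[i],
    [/\ (al != 0) || (be != 0), al * a + be * b = l * al & al * c + be * a = l * be].
  have Hi : ip (al *: G i + be *: G j) (F i) = l * al by rewrite ipDl !ipZl Fi; exact: eal.
  have Hj : ip (al *: G i + be *: G j) (F j) = l * be by rewrite ipDl !ipZl Fj; exact: ebe.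
  exists (al *: G i + be *: G j); split; last first.
    by rewrite Eop_set2 // Hi Hj scalerDr !scalerA.
  apply: contraTneq nz => f0.
  have /eqP : l * al = 0 by rewrite -Hi f0 ip0l.
  have /eqP : l * be = 0 by rewrite -Hj f0 ip0l.
  by rewrite !mulf_eq0 (negPf l0) => /eqP-> /eqP->; rewrite eqxx.
have [b0|b0] := eqVneq b 0.
  have la : l = a by apply/eqP; rewrite -subr_eq0 -sqrf_eq0 e b0 mul0r.
  by exists 0, 1; rewrite oner_eq0 orbT b0 la; split; ring.
exists b, (l - a); rewrite b0; split => //; first by ring.
by rewrite -e; ring.
Qed.

Lemma cmod_eigenvalue_Eop_set2_le l : is_eigenvalue (Eop F G [set i; j]) l ->
  cmod l <= cmod a + Num.sqrt (cmod (b * c)).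
Proof.
have s0 := sqrtr_ge0 (cmod (b * c)).
case/eigenvalue_Eop_set2 => [->|e]; first by rewrite cmod0 addr_ge0 ?cmod_ge0.
have -> : Num.sqrt (cmod (b * c)) = cmod (l - a).
  by rewrite -e expr2 cmodM -expr2 sqrtr_sqr ger0_norm ?cmod_ge0.
by rewrite -[l in cmod l](subrK a) addrC cmodD.
Qed.

End Pair.

Lemma cmod_ip_le_r_m1 i : cmod (ip (F i) (G i)) <= r_m 1 F G.
Proof.
rewrite ip_conj cmod_conj; apply: le_trans _ (spec_rad_le_r_m F G (cards1 i)).
have [->|nz] := eqVneq (ip (G i) (F i)) 0; first by rewrite cmod0 spec_rad_ge0.
exact: cmod_eigenvalue_le (@cmod_eigenvalue_Eop_set1_le i) (is_eigenvalue_Eop_set1 nz).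
Qed.

Lemma cmod_le_r_m2 i j a l : i != j ->
  ip (G i) (F i) = a -> ip (G j) (F j) = a -> l != 0 ->
  (l - a) ^+ 2 = ip (G j) (F i) * ip (G i) (F j) -> cmod l <= r_m 2 F G.
Proof.
move=> ij Fi Fj l0 e.
have ij2 : #|[set i; j]| = 2 by rewrite cards2 ij.
apply: le_trans _ (spec_rad_le_r_m F G ij2).
exact: cmod_eigenvalue_le (cmod_eigenvalue_Eop_set2_le ij Fi Fj)
  (is_eigenvalue_Eop_set2 ij Fi Fj l0 e).
Qed.

End SmallSubsets.

Section RootOfUnity.
Variables (R : realType) (N : nat).

Let theta : R := pi *+ 2 / N%:R.
Definition unity_root : R[i] := cos theta +i* sin theta.
Local Notation w := unity_root.

Lemma unity_rootX m : w ^+ m = cos (theta *+ m) +i* sin (theta *+ m).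
Proof.
elim: m => [|m IHm]; first by rewrite expr0 !mulr0n cos0 sin0.
rewrite exprS IHm mulrS cosD sinD.
by apply/eqP; rewrite eq_complex /= eqxx addrC eqxx.
Qed.

Lemma conj_unity_rootX m : conjc (w ^+ m) * w ^+ m = 1.
Proof.
rewrite unity_rootX; apply/eqP; rewrite eq_complex /= -(cos2Dsin2 (theta *+ m)).
by apply/andP; split; apply/eqP; ring.
Qed.

Lemma unity_root_order : (0 < N)%N -> w ^+ N = 1.
Proof.
move=> N_gt0; rewrite unity_rootX (_ : theta *+ N = pi *+ 2) ?cos2pi ?sin2pi //.
by rewrite -mulr_natr divfK // pnatr_eq0 -lt0n.
Qed.

Lemma unity_rootX_neq1 m : (0 < m < N)%N -> w ^+ m != 1.
Proof.
case/andP => m0 mN; rewrite unity_rootX; apply/negP => /eqP/(congr1 (@complex.Re R)) /=.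
pose x : R := pi * m%:R / N%:R.
have N0 : (0 : R) < N%:R by rewrite ltr0n (ltn_trans m0 mN).
have -> : theta *+ m = x *+ 2.
  rewrite /theta /x -[LHS]mulr_natr -[RHS]mulr_natr -[pi *+ 2]mulr_natr.
  by field; rewrite lt0r_neq0.
have sx : 0 < sin x.
  apply: sin_gt0_pi; apply/andP; split.
    by rewrite divr_gt0 // mulr_gt0 ?pi_gt0 // ltr0n.
  by rewrite ltr_pdivrMr // ltr_pM2l ?pi_gt0 // ltr_nat.
rewrite cos_mulr2n cos2sin2 -[(1 - _) *+ 2]mulr_natr.
set s := sin x in sx *; nra.
Qed.

Lemma sum_conj_unity_root k l : (k < N)%N -> (l < N)%N ->
  \sum_(i < N) conjc (w ^+ (i * k)) * w ^+ (i * l) = (k == l)%:R * N%:R.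
Proof.
wlog kl : k l / (k <= l)%N.
  move=> wlog_kl kN lN; have [/wlog_kl->//|/ltnW lk] := leqP k l.
  rewrite -[LHS]conjcK rmorph_sum /= (eq_bigr (fun i : 'I_N =>
    conjc (w ^+ (i * l)) * w ^+ (i * k))) => [|i _]; last by rewrite rmorphM /= conjcK mulrC.
  by rewrite wlog_kl // eq_sym rmorphM /= !conjc_nat.
move=> kN lN.
have -> : \sum_(i < N) conjc (w ^+ (i * k)) * w ^+ (i * l) = \sum_(i < N) (w ^+ (l - k)) ^+ i.
  apply: eq_bigr => i _.
  have -> : (i * l = i * k + (l - k) * i)%N by rewrite [((l - k) * i)%N]mulnC -mulnDr subnKC.
  by rewrite exprD mulrA conj_unity_rootX mul1r exprM.
have [<-|kl'] := eqVneq k l.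
  by rewrite subnn mul1r (eq_bigr (fun _ => 1)) ?sumr_const ?card_ord // => i; rewrite expr1n.
have w1 : w ^+ (l - k) != 1.
  apply: unity_rootX_neq1; rewrite subn_gt0 ltn_neqAle kl' kl /=.
  exact: leq_ltn_trans (leq_subr _ _) lN.
apply/eqP; rewrite mul0r; move: (subrX1 (w ^+ (l - k)) N).
rewrite -exprM mulnC exprM unity_root_order ?expr1n ?subrr => [/esym/eqP|]; last first.
  exact: leq_ltn_trans lN.
by rewrite mulf_eq0 subr_eq0 (negPf w1).
Qed.

End RootOfUnity.

Section HarmonicFrame.
Variables (R : realType) (n N : nat).
Hypothesis nN : (n < N)%N.

Definition harmonic_frame (i : 'I_N) : 'cV[R[i]]_n :=
  \col_(k < n) unity_root R N ^+ (i * k).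
Definition harmonic_dual (i : 'I_N) : 'cV[R[i]]_n := N%:R^-1 *: harmonic_frame i.

Local Notation w := (unity_root R N).

Let N_neq0 : (N%:R : R[i]) != 0.
Proof. by rewrite pnatr_eq0 -lt0n (leq_ltn_trans (leq0n n) nN). Qed.

Lemma is_dual_harmonic : is_dual harmonic_frame harmonic_dual.
Proof.
move=> f; apply/matrixP => l c; rewrite (ord1 c) summxE.
transitivity (\sum_(i < N) \sum_(k < n)
    (N%:R^-1 * f k 0) * (conjc (w ^+ (i * k)) * w ^+ (i * l))); last first.
  apply: eq_bigr => i _; rewrite !mxE /harmonic_dual ipZr /ip big_distrr big_distrl /=.
  by apply: eq_bigr => k _; rewrite !mxE conjc_inv conjc_nat; ring.
rewrite exchange_big (eq_bigr (fun k : 'I_n => N%:R^-1 * f k 0 * ((k == l)%:R * N%:R))).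
  rewrite (bigD1 l) //= big1 ?addr0 => [|k kl]; last by rewrite (negPf kl) mul0r mulr0.
  by rewrite eqxx mul1r mulrAC mulVf ?mul1r.
by move=> k _; rewrite -big_distrr sum_conj_unity_root // (ltn_trans _ nN).
Qed.

Lemma harmonic_tight f :
  \sum_(i < N) cmod (ip f (harmonic_frame i)) ^+ 2 = N%:R * norm2 f.
Proof.
apply: (@complexI R); rewrite rmorphM rmorph_nat /= -ip_self.
rewrite [X in ip f X](is_dual_harmonic f) ip_sumr rmorph_sum mulr_sumr.
apply: eq_bigr => i _; rewrite ipZr.
have -> : ip f (harmonic_dual i) = N%:R^-1 * ip f (harmonic_frame i).
  by rewrite ipZr conjc_inv conjc_nat.
rewrite [in RHS]rmorphM /= conjc_inv conjc_nat !mulrA mulfV // mul1r mulrC.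
by rewrite mulcJ.
Qed.

Lemma dual_pair_harmonic : dual_pair harmonic_frame harmonic_dual.
Proof.
split; last exact: is_dual_harmonic.
have N_gt0 : (0 : R) < N%:R by rewrite ltr0n (leq_ltn_trans (leq0n n) nN).
by exists N%:R, N%:R; split => //; split => // f; rewrite harmonic_tight.
Qed.

Lemma ip_harmonic_dual i :
  ip (harmonic_dual i) (harmonic_frame i) = (n%:R / N%:R : R)%:C.
Proof.
rewrite /harmonic_dual ipZl /ip (eq_bigr (fun _ => 1)) => [|k _]; last first.
  by rewrite !mxE mulrC conj_unity_rootX.
by rewrite sumr_const card_ord mulrC fmorph_div /= !rmorph_nat.
Qed.

Lemma r_m1_harmonic : r_m 1 harmonic_frame harmonic_dual <= n%:R / N%:R.
Proof.
have a0 : (0 : R) <= n%:R / N%:R by rewrite divr_ge0 ?ler0n.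
apply: r_m_le => // L /eqP /cards1P [i ->].
apply: spec_rad_le => // l /cmod_eigenvalue_Eop_set1_le.
by rewrite ip_harmonic_dual cmod_real.
Qed.

End HarmonicFrame.

Lemma r1_inf_le (R : realType) n N : (n < N)%N -> r1_inf R n N <= n%:R / N%:R.
Proof.
move=> nN; apply: le_trans _ (r_m1_harmonic R n N); apply: ge_inf.
  by exists 0 => _ [F [G [_ ->]]]; apply: r_m_ge0.
by exists (@harmonic_frame R n N), (@harmonic_dual R n N); split => //;
  apply: dual_pair_harmonic.
Qed.

Lemma offdiag_trace_identity (R : realFieldType) n N : (n < N)%N ->
  n%:R - (n%:R / N%:R) ^+ 2 *+ N =
  (n%:R * (N%:R - n%:R) / (N%:R ^+ 2 * (N%:R - 1))) *+ (N * N.-1) :> R.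
Proof.
case: N => [//|[|M]] nN.
  by move: nN; rewrite ltnS leqn0 => /eqP ->; rewrite muln0 mulr0n mul0r expr0n mul0rn subrr.
have NM : ((M.+2).-1%:R : R) = M.+2%:R - 1 by rewrite -natr1 addrK.
rewrite -[_ *+ M.+2]mulr_natr -[_ *+ (_ * _)]mulr_natr natrM NM.
have M0 := ler0n R M.
by field; rewrite !lt0r_neq0 //; lra.
Qed.

Section OptimalPairs.
Variables (R : realType) (n N : nat) (F G : 'I_N -> 'cV[R[i]]_n).
Hypotheses (nN : (n < N)%N) (FG : in_R1 F G).

Let a : R := n%:R / N%:R.
Let t : R := n%:R * (N%:R - n%:R) / (N%:R ^+ 2 * (N%:R - 1)).
Let p i j := ip (F i) (G j) * ip (F j) (G i).

Let N_gt0 : (0 < N)%N. Proof. exact: leq_ltn_trans (leq0n n) nN. Qed.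
Let dual_FG : is_dual F G. Proof. by case: FG => [[]]. Qed.

Lemma in_R1_diag i : ip (F i) (G i) = a%:C.
Proof.
apply: (@eq_cmod_le_of_sum _ _ (fun i => ip (F i) (G i))) => [j|].
  apply: le_trans (cmod_ip_le_r_m1 F G j) _.
  by case: FG => _ ->; apply: r1_inf_le.
rewrite -Re_sum dual_trace // raddfMn /= -[_ *+ N]mulr_natr divfK //.
by rewrite pnatr_eq0 -lt0n.
Qed.

Lemma in_R1_offdiag_sum :
  \sum_(i < N) \sum_(j < N | j != i) p i j = (t *+ (N * N.-1))%:C.
Proof.
have diag : \sum_(i < N) p i i = ((n%:R / N%:R) ^+ 2 *+ N)%:C.
  rewrite (eq_bigr (fun=> ((n%:R / N%:R) ^+ 2)%:C)) => [|i _].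
    by rewrite sumr_const card_ord rmorphMn.
  by rewrite /p in_R1_diag rmorphXn expr2.
have split_diag : \sum_(i < N) \sum_(j < N) p i j =
    \sum_(i < N) p i i + \sum_(i < N) \sum_(j < N | j != i) p i j.
  by rewrite -big_split; apply: eq_bigr => i _; rewrite (bigD1 i).
rewrite -offdiag_trace_identity // rmorphB [in X in X - _]rmorphMn rmorph1.
by rewrite -(dual_trace_sqr dual_FG) split_diag diag addrC addKr.
Qed.

Lemma conj_offdiag i j : conjc (p i j) = ip (G j) (F i) * ip (G i) (F j).
Proof. by rewrite rmorphM /= -!ip_conj. Qed.

Let a_ge0 : 0 <= a. Proof. by rewrite divr_ge0 ?ler0n. Qed.

Let t_ge0 : 0 <= t.
Proof.
rewrite divr_ge0 ?mulr_ge0 ?exprn_ge0 ?ler0n // subr_ge0 ?ler1n ?ler_nat //.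
exact: ltnW.
Qed.

Let diag_GF k : ip (G k) (F k) = a%:C.
Proof. by rewrite ip_conj in_R1_diag conjc_real. Qed.

Lemma Re_offdiag_le i j : r_m 2 F G <= a + Num.sqrt t -> i != j ->
  cRe (p i j) <= t /\ (cRe (p i j) = t -> p i j = t%:C).
Proof.
(* [a + s] is an eigenvalue of [E_{i,j}] for [s] the principal square root of
   [conj (p i j)], so its real part is bounded by [r_m 2 F G]. *)
move=> r2 ij; set s := sqrtc (conjc (p i j)).
have s_ge0 : 0 <= cRe s.
  by rewrite /s; case: (conjc (p i j)) => x y; rewrite /sqrtc /= sqrtr_ge0.
have s_le : cRe s <= Num.sqrt t.
  rewrite -(lerD2l a) -[a in a + _]/(cRe a%:C) -raddfD; apply: le_trans r2.
  have [->|l0] := eqVneq (a%:C + s) 0; first exact: r_m_ge0.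
  apply: le_trans (Re_le_cmod _) (cmod_le_r_m2 ij (diag_GF i) (diag_GF j) l0 _).
  by rewrite [a%:C + s]addrC addrK sqr_sqrtc conj_offdiag.
have [Re_le Re_eq] := Re_sqr_le t_ge0 s_ge0 s_le.
have Re_p : cRe (p i j) = cRe (s ^+ 2) by rewrite sqr_sqrtc; case: (p i j).
rewrite Re_p; split => // /Re_eq e.
by rewrite -[p i j]conjcK -(sqr_sqrtc (conjc (p i j))) -/s e conjc_real.
Qed.

Lemma uniform2_of_r_m2_le : r_m 2 F G <= a + Num.sqrt t -> uniform2 F G.
Proof.
move=> r2; split; first by exists a%:C; apply: in_R1_diag.
exists t%:C => i j ij; apply: (Re_offdiag_le r2 ij).2.
apply: (@eq_bound_of_sum_offdiag _ _ (fun i j => cRe (p i j))) ij => [k l kl|].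
  exact: (Re_offdiag_le r2 kl).1.
by under eq_bigr do rewrite -Re_sum; rewrite -Re_sum in_R1_offdiag_sum.
Qed.

Lemma uniform2_offdiag : uniform2 F G -> forall i j, i != j -> p i j = t%:C.
Proof.
case=> _ [d pd] i j ij.
have N_gt1 : (1 < N)%N by have := max_card [set i; j]; rewrite cards2 ij card_ord.
have e : d *+ (N * N.-1) = t%:C *+ (N * N.-1).
  rewrite -rmorphMn /= -in_R1_offdiag_sum -sum_offdiag_const.
  by apply: eq_bigr => k _; apply: eq_bigr => l lk; rewrite /p pd // eq_sym.
apply: (@mulIf _ (N * N.-1)%:R).
  by rewrite pnatr_eq0 muln_eq0 negb_or -!lt0n N_gt0 ltn_predRL.
by rewrite !mulr_natr -e /p pd.
Qed.

Lemma r_m2_of_uniform2 : uniform2 F G -> r_m 2 F G = a + Num.sqrt t.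
Proof.
move=> /uniform2_offdiag p_t.
have w_t i j : i != j -> ip (G j) (F i) * ip (G i) (F j) = t%:C.
  by move=> ij; rewrite -conj_offdiag p_t // conjc_real.
have sqrt_t_ge0 := sqrtr_ge0 t.
apply/eqP; rewrite eq_le; apply/andP; split.
  apply: r_m_le => [|L /eqP/cards2P [i [j [ij ->]]]]; first by rewrite addr_ge0.
  apply: spec_rad_le => [|l El]; first by rewrite addr_ge0.
  have := cmod_eigenvalue_Eop_set2_le ij (diag_GF i) (diag_GF j) El.
  by rewrite w_t // !cmod_real.
have [n0|n_gt0] := posnP n.
  have -> : a + Num.sqrt t = 0 by rewrite /a /t n0 !mul0r sqrtr0 addr0.
  exact: r_m_ge0.
have N_gt1 : (1 < N)%N by apply: leq_ltn_trans nN.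
pose i0 : 'I_N := Ordinal N_gt0; pose j0 : 'I_N := Ordinal N_gt1.
have l0 : (a + Num.sqrt t)%:C != 0.
  have a_gt0 : 0 < a by rewrite divr_gt0 ?ltr0n.
  by apply/eqP => /(congr1 (@complex.Re R)) /=; lra.
rewrite -[leLHS](cmod_real (addr_ge0 a_ge0 sqrt_t_ge0)).
apply: (@cmod_le_r_m2 _ _ _ F G i0 j0 a%:C) => //.
by rewrite w_t // rmorphD [a%:C + _]addrC addrK -rmorphXn sqr_sqrtr.
Qed.

End OptimalPairs.

Theorem mainTheorem12 (R : realType) (n N : nat) (F G : 'I_N -> 'cV[R[i]]_n) :
  (n < N)%N -> in_R1 F G ->
  (r_m 2 F G = n%:R / N%:R
      + Num.sqrt (n%:R * (N%:R - n%:R) / (N%:R ^+ 2 * (N%:R - 1)))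
   <-> uniform2 F G).
Proof.
move=> nN FG; split => [r2|]; last exact: r_m2_of_uniform2.
by apply: uniform2_of_r_m2_le nN FG _; rewrite r2.
Qed.
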